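(* Let $T$ be a tree. Then $\mathcal{Z}^{\mathrm{TE}}_-(T)$ is connected.
   Context: Skew forcing: vertices are colored blue or white; if any vertex $u$ (blue or white) has exactly one white neighbor $v$, then $u$ may force $v$ to become blue. A skew forcing set is a (possibly empty) set of initially blue vertices from which repeated application of this rule turns every vertex blue; $\mathrm{Z}_-(G)$ is the minimum size of a skew forcing set. $\mathcal{Z}^{\mathrm{TE}}_-(G)$ has as vertices the minimum skew forcing sets of $G$, with $S_1S_2$ an edge iff $S_1\setminus S_2=\{v_1\}$ and $S_2\setminus S_1=\{v_2\}$ for some vertices $v_1,v_2$. *)

From mathcomp Require Import all_boot.
Set Implicit Arguments. Unset Strict Implicit. Unset Printing Implicit Defensive.

Section SkewForcing.
Variables (T : finType) (e : rel T).

Definition simple_graph : Prop := symmetric e /\ irreflexive e.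

Definition graph_connected : Prop := forall x y : T, connect e x y.

Definition acyclic : Prop := forall c : seq T, uniq c -> 3 <= size c -> ~~ cycle e c.

Definition is_tree : Prop := [/\ simple_graph, graph_connected & acyclic].

(* One application of the skew forcing rule: some vertex u (blue or white)
   has exactly one white neighbor v, and v becomes blue. *)
Definition skew_force_step : rel {set T} := fun B B' =>
  [exists u : T, exists v : T,
     ([set w | e u w] :&: ~: B == [set v]) && (B' == v |: B)].

Definition skew_forcing_set (S : {set T}) : bool :=
  connect skew_force_step S setT.

Definition min_skew_forcing_set (S : {set T}) : bool :=
  skew_forcing_set S &&
  [forall S' : {set T}, skew_forcing_set S' ==> (#|S| <= #|S'|)].

Definition ZTE_adj : rel {set T} := fun S1 S2 =>
  [&& min_skew_forcing_set S1, min_skew_forcing_set S2,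
      [exists v1 : T, S1 :\: S2 == [set v1]] &
      [exists v2 : T, S2 :\: S1 == [set v2]]].

Definition ZTE_connected : Prop :=
  forall S1 S2 : {set T}, min_skew_forcing_set S1 -> min_skew_forcing_set S2 ->
    connect ZTE_adj S1 S2.

End SkewForcing.

(* Induction on the vertex set U of an induced subforest G[U].  If G[U] has no
   edge nothing can ever be forced, so U is its only skew forcing set.  Otherwise
   G[U] has a leaf l with neighbour p; let U' = U \ {l, p}.  A skew forcing set of
   G[U'] is one of G[U] (l forces p first, p forces l last), and a skew forcing
   set S of G[U] yields the skew forcing set Q ∪ (S ∩ U') of G[U'], where Q is
   empty or the vertex that p forces.  Hence Z_-(G[U]) = Z_-(G[U']), the minimum
   skew forcing sets of G[U'] are those of G[U] avoiding l and p, and a minimum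
   set S of G[U] meeting {l, p} is adjacent to Q ∪ (S ∩ U'), which avoids them. *)
From mathcomp Require Import all_boot zify.
Set Implicit Arguments. Unset Strict Implicit. Unset Printing Implicit Defensive.

Lemma connect_left_ind (A : finType) (r : rel A) (P : A -> A -> Prop) :
  (forall x, P x x) ->
  (forall x y z, r x y -> connect r y z -> P y z -> P x z) ->
  forall x y, connect r x y -> P x y.
Proof.
move=> P0 PS x y /connectP [s]; elim: s x => [|a s IHs] x /=; first by move=> _ ->.
case/andP=> rxa sa ly; apply: (PS x a y rxa); last exact: IHs.
by apply/connectP; exists s.
Qed.

Section InducedSkewForcing.
Variables (T : finType) (e : rel T).
Implicit Types (U B X S : {set T}) (u v : T).

Definition white_nbhd (U B : {set T}) (u : T) : {set T} :=
  [set w in U | e u w] :\: B.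

Definition skew_force_step_in (U : {set T}) : rel {set T} := fun B B' =>
  [exists u in U, exists v, (white_nbhd U B u == [set v]) && (B' == v |: B)].

Definition skew_forcing_set_in (U S : {set T}) : bool :=
  (S \subset U) && connect (skew_force_step_in U) S U.

Definition min_skew_forcing_set_in (U S : {set T}) : bool :=
  skew_forcing_set_in U S &&
  [forall S' : {set T}, skew_forcing_set_in U S' ==> (#|S| <= #|S'|)].

Definition ZTE_adj_in (U : {set T}) : rel {set T} := fun S1 S2 =>
  [&& min_skew_forcing_set_in U S1, min_skew_forcing_set_in U S2,
      [exists v1 : T, S1 :\: S2 == [set v1]] &
      [exists v2 : T, S2 :\: S1 == [set v2]]].

Lemma white_nbhd_eq1 U B u v : white_nbhd U B u = [set v] ->
  forall w, [&& w \notin B, w \in U & e u w] = (w == v).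
Proof. by move=> /setP nbhd_uv w; have := nbhd_uv w; rewrite !inE. Qed.

Lemma white_nbhd_subset U B u v : white_nbhd U B u = [set v] ->
  [set w in U | e u w] \subset v |: B.
Proof.
move/white_nbhd_eq1 => nbhd; apply/subsetP => w; rewrite !inE => /andP [wU euw].
by rewrite -nbhd wU euw !andbT; case: (w \in B).
Qed.

Lemma skew_force_stepP U B (B' : {set T}) :
  reflect (exists2 u, u \in U & exists2 v, white_nbhd U B u = [set v] & B' = v |: B)
          (skew_force_step_in U B B').
Proof.
apply: (iffP existsP) => [[u /andP [uU /existsP [v /andP [/eqP nbhd /eqP ->]]]]|].
  by exists u => //; exists v.
case=> u uU [v nbhd ->]; exists u; rewrite uU; apply/existsP; exists v.
by rewrite nbhd !eqxx.
Qed.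

Lemma skew_force_step_subset U B (B' : {set T}) : skew_force_step_in U B B' -> B \subset B'.
Proof. by case/skew_force_stepP=> u _ [v _ ->]; apply: subsetUr. Qed.

Lemma connect_skew_force_subset U B X :
  connect (skew_force_step_in U) B X -> B \subset X.
Proof.
move: B X; apply: connect_left_ind => // B Y X /skew_force_step_subset sBY _.
exact: subset_trans.
Qed.

Lemma skew_force_step_setU U B (B' : {set T}) X :
  skew_force_step_in U B X -> B \subset B' ->
  connect (skew_force_step_in U) B' (X :|: B').
Proof.
case/skew_force_stepP=> u uU [v nbhd ->] sBB'.
rewrite -setUA (setUidPr sBB').
have := white_nbhd_eq1 nbhd v; rewrite eqxx => /and3P [_ vU euv].
have [vB'|vB'] := boolP (v \in B'); first by rewrite (setUidPr _) ?sub1set.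
apply/connect1/skew_force_stepP; exists u => //; exists v => //.
apply/setP => w; rewrite !inE; apply/idP/idP; last first.
  by move/eqP->; rewrite vB' vU euv.
case/and3P=> wB' wU euw; rewrite -(white_nbhd_eq1 nbhd) wU euw !andbT.
by apply: contra wB'; apply: (subsetP sBB').
Qed.

Lemma connect_skew_force_setU U B (B' : {set T}) X :
  connect (skew_force_step_in U) B X -> B \subset B' ->
  connect (skew_force_step_in U) B' (X :|: B').
Proof.
move=> cBX; elim/connect_left_ind: B X / cBX B' => [B B' sBB'|B Y X stBY cYX IH B' sBB'].
  by rewrite (setUidPr sBB').
apply: connect_trans (skew_force_step_setU stBY sBB') _.
have := IH (Y :|: B') (subsetUl _ _).
by rewrite setUA (setUidPl (connect_skew_force_subset cYX)).
Qed.

Lemma skew_force_step_restrict U U' B u v :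
  U' \subset U -> u \in U' -> v \in U' -> white_nbhd U B u = [set v] ->
  skew_force_step_in U' (B :&: U') (v |: (B :&: U')).
Proof.
move=> sU'U uU' vU' nbhd; apply/skew_force_stepP; exists u => //; exists v => //.
apply/setP => w; rewrite !inE -(white_nbhd_eq1 nbhd).
have [wU'|wU'] := boolP (w \in U'); first by rewrite (subsetP sU'U w wU') !andbT.
rewrite andbF (white_nbhd_eq1 nbhd); apply/esym/eqP => wv.
by rewrite wv vU' in wU'.
Qed.

Lemma skew_forcing_set_edgeless U S :
  (forall u v, u \in U -> v \in U -> ~~ e u v) -> skew_forcing_set_in U S -> S = U.
Proof.
move=> no_edge /andP [_ /connectP [[|B s] /= stS ->]] //.
case/andP: stS => /skew_force_stepP [u uU [v nbhd _]] _.
have := white_nbhd_eq1 nbhd v; rewrite eqxx => /and3P [_ vU euv].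
by have := no_edge u v uU vU; rewrite euv.
Qed.

Lemma min_skew_forcing_set_inW U S : min_skew_forcing_set_in U S -> skew_forcing_set_in U S.
Proof. by case/andP. Qed.

Lemma min_skew_forcing_set_in_leq U S S' :
  min_skew_forcing_set_in U S -> skew_forcing_set_in U S' -> #|S| <= #|S'|.
Proof. by case/andP=> _ /forallP /(_ S') /implyP. Qed.

Lemma min_skew_forcing_set_in_card U S S' :
  min_skew_forcing_set_in U S -> skew_forcing_set_in U S' -> #|S'| <= #|S| ->
  min_skew_forcing_set_in U S'.
Proof.
move=> minS fS' leS'S; rewrite /min_skew_forcing_set_in fS'; apply/forallP => S''.
by apply/implyP => /(min_skew_forcing_set_in_leq minS); apply: leq_trans.
Qed.

Lemma ZTE_adj_in_sym U : symmetric (ZTE_adj_in U).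
Proof. by move=> S1 S2; apply/and4P/and4P => -[? ? ? ?]; split. Qed.

Lemma ZTE_adj_inP U S1 S2 :
  min_skew_forcing_set_in U S1 -> min_skew_forcing_set_in U S2 ->
  #|S1 :\: S2| = 1 -> ZTE_adj_in U S1 S2.
Proof.
move=> min1 min2 card12.
have eq_card : #|S1| = #|S2|.
  have := min_skew_forcing_set_in_leq min1 (min_skew_forcing_set_inW min2).
  have := min_skew_forcing_set_in_leq min2 (min_skew_forcing_set_inW min1).
  by move=> le21 le12; apply/eqP; rewrite eqn_leq le12 le21.
have card21 : #|S2 :\: S1| = 1.
  by move: (cardsID S2 S1) (cardsID S1 S2); rewrite setIC eq_card card12 => <- /addnI.
rewrite /ZTE_adj_in min1 min2 /=.
have [v1 ->] := cards1P (introT eqP card12).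
have [v2 ->] := cards1P (introT eqP card21).
by apply/andP; split; apply/existsP; [exists v1 | exists v2].
Qed.

Lemma skew_force_step_in_setT : skew_force_step_in setT =2 skew_force_step e.
Proof.
move=> B B'; apply: eq_existsb => u; rewrite in_setT; apply: eq_existsb => v.
by rewrite /white_nbhd setDE setIdE setTI.
Qed.

Lemma skew_forcing_set_in_setT : skew_forcing_set_in setT =1 skew_forcing_set e.
Proof.
by move=> S; rewrite /skew_forcing_set_in subsetT (eq_connect skew_force_step_in_setT).
Qed.

Lemma min_skew_forcing_set_in_setT :
  min_skew_forcing_set_in setT =1 min_skew_forcing_set e.
Proof.
move=> S; rewrite /min_skew_forcing_set_in skew_forcing_set_in_setT.
by congr (_ && _); apply: eq_forallb => S'; rewrite skew_forcing_set_in_setT.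
Qed.

Lemma ZTE_adj_in_setT : ZTE_adj_in setT =2 ZTE_adj e.
Proof. by move=> S1 S2; rewrite /ZTE_adj_in !min_skew_forcing_set_in_setT. Qed.

End InducedSkewForcing.

Section LeafDeletion.
Variables (T : finType) (e : rel T).
Hypotheses (e_sym : symmetric e) (e_irr : irreflexive e).
Variables (U : {set T}) (l p : T).
Hypotheses (lU : l \in U) (leaf_lp : [set w in U | e l w] = [set p]).
Implicit Types (B X Y S : {set T}) (u : T).

Local Notation U' := (U :\ l :\ p).
Local Notation step := (skew_force_step_in e).
Local Notation forcing := (skew_forcing_set_in e).
Local Notation min_forcing := (min_skew_forcing_set_in e).

Lemma leaf_edge : [/\ p \in U, e l p & l != p].
Proof.
have : p \in [set w in U | e l w] by rewrite leaf_lp set11.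
rewrite inE => /andP [pU elp]; split => //.
by apply: contraTneq elp => ->; rewrite e_irr.
Qed.

Lemma leaf_nbr u : u \in U -> e u l -> u = p.
Proof.
by move=> uU eul; apply/set1P; rewrite -leaf_lp inE uU e_sym.
Qed.

Lemma leaf_del_subset : U' \subset U.
Proof. by apply/subsetP => w; rewrite !inE => /and3P []. Qed.

Lemma connect_skew_force_lift B X :
  connect (step U') B X -> connect (step U) (p |: B) (p |: X).
Proof.
move=> cBX; elim/connect_left_ind: B X / cBX => // B Y X.
case/skew_force_stepP=> u uU' [v nbhd ->] _.
apply: connect_trans; apply/connect1/skew_force_stepP.
move: (uU'); rewrite !inE => /and3P [up ul uU].
exists u => //; exists v; last by rewrite setUCA.
apply/setP => w; rewrite -nbhd !inE.
have [->|wl] := eqVneq w l; last by case: (w == p); rewrite ?andbF ?andbT.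
rewrite lU !andbF /= andbC; have [eul|] := boolP (e u l) => //.
by rewrite (leaf_nbr uU eul) eqxx in up.
Qed.

Lemma skew_forcing_set_lift S : forcing U' S -> forcing U S.
Proof.
have [pU elp nlp] := leaf_edge.
case/andP=> sSU' cS; have sSU := subset_trans sSU' leaf_del_subset.
rewrite /skew_forcing_set_in sSU /=.
have pS : p \notin S by apply/negP => /(subsetP sSU'); rewrite !inE eqxx.
have pU'l : p |: U' = U :\ l by rewrite setD1K // !inE eq_sym nlp.
have l_forces_p : step U S (p |: S).
  apply/skew_force_stepP; exists l => //; exists p => //.
  by rewrite /white_nbhd leaf_lp; apply/setDidPl; rewrite disjoints1.
have p_forces_l : step U (U :\ l) U.
  apply/skew_force_stepP; exists p => //; exists l; last by rewrite setD1K.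
  apply/setP => w; rewrite !inE.
  by have [->|_] := eqVneq w l; [rewrite lU e_sym elp | case: (w \in U)].
apply: connect_trans (connect1 l_forces_p) _; rewrite -pU'l in p_forces_l.
exact: connect_trans (connect_skew_force_lift cS) (connect1 p_forces_l).
Qed.

(* Under this invariant p never forces a vertex of U', so forcing chains of G[U]
   restrict to G[U']. *)
Definition leaf_settled B := (l \in B) ==> ([set w in U | e p w] :\ l \subset B).

Lemma skew_force_step_settled B Y :
  step U B Y -> leaf_settled B -> leaf_settled Y.
Proof.
case/skew_force_stepP=> u uU [v nbhd ->] /implyP settledB; apply/implyP.
case/setU1P=> [lv|lB]; last exact: subset_trans (settledB lB) (subsetUr _ _).
have := white_nbhd_eq1 nbhd v; rewrite eqxx -lv => /and3P [_ _ eul].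
rewrite -(leaf_nbr uU eul) lv.
exact: subset_trans (subD1set _ _) (white_nbhd_subset nbhd).
Qed.

Lemma skew_force_step_restrict_settled B Y :
  step U B Y -> leaf_settled B -> connect (step U') (B :&: U') (Y :&: U').
Proof.
case/skew_force_stepP=> u uU [v nbhd ->] /implyP settledB.
have := white_nbhd_eq1 nbhd v; rewrite eqxx => /and3P [vB vU euv].
have [vU'|vU'] := boolP (v \in U'); last first.
  by rewrite setIUl (@disjoint_setI0 _ [set v]) ?disjoints1 // set0U.
have [vp vl] : v != p /\ v != l by move: vU'; rewrite !inE => /and3P [].
have ul : u != l.
  by apply: contra_neq vp => ul; apply/set1P; rewrite -leaf_lp inE vU -ul euv.
have up : u != p.
  apply: contraNneq vB => up; have [_ elp _] := leaf_edge.
  have lB : l \in B.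
    have := white_nbhd_eq1 nbhd l; rewrite lU up e_sym elp eq_sym (negbTE vl) !andbT.
    exact: negbFE.
  by apply: (subsetP (settledB lB)); rewrite !inE vl vU -up.
have uU' : u \in U' by rewrite !inE up ul.
rewrite setIUl [[set v] :&: _](setIidPl _) ?sub1set //.
exact: connect1 (skew_force_step_restrict leaf_del_subset uU' vU' nbhd).
Qed.

Lemma connect_skew_force_restrict_settled B X :
  connect (step U) B X -> leaf_settled B -> connect (step U') (B :&: U') (X :&: U').
Proof.
move=> cBX; elim/connect_left_ind: B X / cBX => // B Y X stBY _ IH settledB.
apply: connect_trans (skew_force_step_restrict_settled stBY settledB) _.
exact/IH/(skew_force_step_settled stBY).
Qed.

(* Q is the vertex forced by p, if p forces at all. *)
Lemma connect_skew_force_restrict_blue B X :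
  connect (step U) B X -> l \in B -> p \in B ->
  exists Q : {set T}, [/\ Q \subset U', #|Q| <= 1 &
                         connect (step U') (Q :|: (B :&: U')) (X :&: U')].
Proof.
move=> cBX; elim/connect_left_ind: B X / cBX => [B _ _|B Y X stBY cYX IH lB pB].
  by exists set0; rewrite sub0set cards0 set0U.
have := stBY; case/skew_force_stepP=> u uU [v nbhd defY].
have := white_nbhd_eq1 nbhd v; rewrite eqxx => /and3P [vB vU euv].
have vU' : v \in U'.
  by rewrite !inE vU andbT; apply/andP; split; apply: contraNneq vB => ->.
have YU' : Y :&: U' = v |: (B :&: U').
  by rewrite defY setIUl [[set v] :&: _](setIidPl _) ?sub1set.
have [up|up] := eqVneq u p.
  exists [set v]; rewrite sub1set cards1 -YU'; split => //.
  apply: connect_skew_force_restrict_settled cYX _; apply/implyP => _.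
  rewrite defY -up; exact: subset_trans (subD1set _ _) (white_nbhd_subset nbhd).
have ul : u != l.
  by apply: contraNneq vB => ul; have /set1P -> : v \in [set p] by rewrite -leaf_lp inE vU -ul.
have uU' : u \in U' by rewrite !inE up ul.
have stB'Y' := skew_force_step_restrict leaf_del_subset uU' vU' nbhd; rewrite -YU' in stB'Y'.
have sBY : B \subset Y := skew_force_step_subset stBY.
have [Q [sQU' cardQ cQ]] := IH (subsetP sBY l lB) (subsetP sBY p pB).
exists Q; split => //; apply: connect_trans cQ.
have := connect_skew_force_setU (connect1 stB'Y') (subsetUr Q (B :&: U')).
by rewrite setUCA (setUidPl (setSI U' sBY)).
Qed.

Lemma skew_forcing_set_restrict S :
  forcing U S -> l \notin S -> p \notin S -> forcing U' S.
Proof.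
case/andP=> sSU cS lS pS.
have sSU' : S \subset U'.
  apply/subsetP => w wS; rewrite !inE (subsetP sSU) // andbT.
  by apply/andP; split; apply: contraTneq wS => ->.
rewrite /skew_forcing_set_in sSU' /=.
have := connect_skew_force_restrict_settled cS.
by rewrite (setIidPl sSU') (setIidPr leaf_del_subset) /leaf_settled (negbTE lS); apply.
Qed.

Lemma skew_forcing_set_shrink S : forcing U S ->
  exists Q : {set T}, [/\ #|Q| <= 1, #|Q :|: (S :&: U')| <= #|S| &
                         forcing U' (Q :|: (S :&: U'))].
Proof.
move=> fS; have /andP [sSU cS] := fS.
have [lpS|] := boolP ((l \in S) || (p \in S)); last first.
  rewrite negb_or => /andP [lS pS]; exists set0.
  have fS' := skew_forcing_set_restrict fS lS pS; case/andP: (fS') => sSU' _.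
  by rewrite set0U (setIidPl sSU') cards0.
have ltSU'S : #|S :&: U'| < #|S|.
  apply/proper_card/properP; split; first exact: subsetIl.
  by case/orP: lpS => [lS|pS]; [exists l | exists p]; rewrite // !inE eqxx ?andbF.
have [pU _ _] := leaf_edge.
have sSB : S \subset l |: (p |: S) by rewrite setUA subsetUr.
have := connect_skew_force_setU cS sSB.
have -> : U :|: (l |: (p |: S)) = U.
  by apply/setUidPl; rewrite !subUset !sub1set lU pU sSU.
case/connect_skew_force_restrict_blue; rewrite ?(setIidPr leaf_del_subset) ?inE ?eqxx ?orbT //.
move=> Q [sQU' cardQ cQ]; exists Q; split => //; first by have := cardsU Q (S :&: U'); lia.
rewrite /skew_forcing_set_in subUset sQU' subsetIr /=.
suff <- : (l |: (p |: S)) :&: U' = S :&: U' by [].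
by apply/setP => w; rewrite !inE; case: (w =P l); case: (w =P p); rewrite ?andbF.
Qed.

Lemma min_skew_forcing_set_lift S : min_forcing U' S -> min_forcing U S.
Proof.
move=> minS; rewrite /min_skew_forcing_set_in.
rewrite (skew_forcing_set_lift (min_skew_forcing_set_inW minS)) /=.
apply/forallP => S'; apply/implyP => /skew_forcing_set_shrink [Q [_ leS' fS'']].
exact: leq_trans (min_skew_forcing_set_in_leq minS fS'') leS'.
Qed.

Lemma min_skew_forcing_set_restrict S :
  min_forcing U S -> l \notin S -> p \notin S -> min_forcing U' S.
Proof.
move=> minS lS pS; rewrite /min_skew_forcing_set_in.
rewrite (skew_forcing_set_restrict (min_skew_forcing_set_inW minS) lS pS) /=.
apply/forallP => S'; apply/implyP => /skew_forcing_set_lift.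
exact: min_skew_forcing_set_in_leq.
Qed.

Lemma min_skew_forcing_set_avoid_leaf S : min_forcing U S ->
  exists S', [/\ min_forcing U S', l \notin S', p \notin S' &
                 connect (ZTE_adj_in e U) S S'].
Proof.
move=> minS; have [lpS|] := boolP ((l \in S) || (p \in S)); last first.
  by rewrite negb_or => /andP [lS pS]; exists S; split.
have [Q [cardQ leXS fX]] := skew_forcing_set_shrink (min_skew_forcing_set_inW minS).
set X := Q :|: (S :&: U') in leXS fX.
have minX := min_skew_forcing_set_in_card minS (skew_forcing_set_lift fX) leXS.
have sXU' : X \subset U' by case/andP: fX.
have [lX pX] : l \notin X /\ p \notin X.
  by split; apply/negP => /(subsetP sXU'); rewrite !inE eqxx ?andbF.
exists X; split => //; apply/connect1/ZTE_adj_inP => //.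
have -> : S :\: X = S :\: U'.
  apply/setP => w; rewrite !(in_setD S) andbC [RHS]andbC; apply: andb_id2l => wS.
  congr (~~ _); apply/idP/idP => [/(subsetP sXU') // | wU'].
  by rewrite /X in_setU in_setI wS wU' orbT.
have : 0 < #|S :\: U'|.
  apply/card_gt0P; case/orP: lpS => [lS|pS]; [exists l | exists p];
    by rewrite in_setD ?lS ?pS !inE eqxx ?andbF.
have := min_skew_forcing_set_in_leq minS (min_skew_forcing_set_inW minX); rewrite /X.
have := cardsID U' S; have := cardsU Q (S :&: U'); lia.
Qed.

Lemma ZTE_adj_in_lift S1 S2 : ZTE_adj_in e U' S1 S2 -> ZTE_adj_in e U S1 S2.
Proof.
case/and4P=> min1 min2 d12 d21.
by rewrite /ZTE_adj_in !min_skew_forcing_set_lift ?d12 ?d21.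
Qed.

Lemma ZTE_adj_in_connected_leaf S1 S2 :
  (forall X1 X2, min_forcing U' X1 -> min_forcing U' X2 -> connect (ZTE_adj_in e U') X1 X2) ->
  min_forcing U S1 -> min_forcing U S2 -> connect (ZTE_adj_in e U) S1 S2.
Proof.
move=> connected' min1 min2.
have [X1 [minX1 lX1 pX1 cSX1]] := min_skew_forcing_set_avoid_leaf min1.
have [X2 [minX2 lX2 pX2 cSX2]] := min_skew_forcing_set_avoid_leaf min2.
have cX12 : connect (ZTE_adj_in e U) X1 X2.
  move: (connected' X1 X2 (min_skew_forcing_set_restrict minX1 lX1 pX1)
                          (min_skew_forcing_set_restrict minX2 lX2 pX2)).
  by apply: connect_sub => A B /ZTE_adj_in_lift /connect1.
apply: connect_trans cSX1 (connect_trans cX12 _).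
by rewrite (sym_connect_sym (ZTE_adj_in_sym e U)).
Qed.

End LeafDeletion.

Section ForestLeaf.
Variables (T : finType) (e : rel T).
Hypotheses (e_sym : symmetric e) (e_irr : irreflexive e) (e_acyclic : acyclic e).
Variable U : {set T}.

Lemma path_end_leaf x y s :
  uniq (x :: y :: s) -> y \in U -> path e x (y :: s) ->
  {subset [set w in U | e x w] <= x :: y :: s} -> [set w in U | e x w] = [set y].
Proof.
move=> uniq_xys yU exys nbhd_x; apply/setP => w.
apply/idP/set1P => [xw|->]; last by rewrite inE yU; case/andP: exys.
have := nbhd_x w xw; rewrite !inE => /or3P [/eqP wx|/eqP //|ws].
  by move: xw; rewrite inE wx e_irr andbF.
case/splitPr: ws uniq_xys exys xw => s1 s2.
rewrite -cat_rcons -!cat_cons cat_uniq cat_path => /andP [uniq_c _] /andP [path_c _] xw.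
have := e_acyclic uniq_c; rewrite [size _]/= size_rcons => /(_ isT) /negP []; rewrite /=.
rewrite rcons_path last_rcons [e w x]e_sym andbA.
by move: xw; rewrite inE => /andP [_ ->]; rewrite andbT.
Qed.

Lemma exists_leaf_of_path x y s :
  uniq (x :: y :: s) -> {subset x :: y :: s <= U} -> path e x (y :: s) ->
  exists l p, l \in U /\ [set w in U | e l w] = [set p].
Proof.
have [n] := ubnP (#|U| - size s).
elim: n x y s => // n IHn x y s lt_n uniq_xys sub_xys exys.
have [/existsP [w /and3P [wU exw w_new]]|no_ext] :=
  boolP [exists w in U, e x w && (w \notin x :: y :: s)].
  have uniq_wxys : uniq (w :: x :: y :: s) by rewrite /= w_new.
  have sub_wxys : {subset w :: x :: y :: s <= U} by move=> z /predU1P [->|/sub_xys].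
  have : size (w :: x :: y :: s) <= #|U|.
    by rewrite -(card_uniqP uniq_wxys); apply/subset_leq_card/subsetP.
  move=> /= le_size; apply: (IHn w x (y :: s)) => //=; last by rewrite e_sym exw.
  by move: le_size lt_n; set k := size s; lia.
exists x, y; split; first by apply: sub_xys; rewrite inE eqxx.
apply: (@path_end_leaf x y s) => //; first by apply: sub_xys; rewrite !inE eqxx orbT.
move=> w; rewrite inE => /andP [wU exw]; apply: contraNT no_ext => w_new.
by apply/existsP; exists w; rewrite wU exw.
Qed.

Lemma forest_leaf_or_edgeless :
  (exists l p, l \in U /\ [set w in U | e l w] = [set p]) \/
  (forall u v, u \in U -> v \in U -> ~~ e u v).
Proof.
have [/existsP [u /andP [uU /existsP [v /andP [vU euv]]]]|no_edge] :=
  boolP [exists u in U, exists v in U, e u v]; [left | right].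
  apply: (@exists_leaf_of_path u v [::]) => /=; last by rewrite euv.
    by rewrite inE andbT; apply: contraTneq euv => ->; rewrite e_irr.
  by move=> w; rewrite !inE => /orP [] /eqP ->.
move=> u v uU vU; apply: contra no_edge => euv.
by apply/existsP; exists u; rewrite uU; apply/existsP; exists v; rewrite vU.
Qed.

End ForestLeaf.

Lemma forest_ZTE_adj_in_connected (T : finType) (e : rel T) :
  symmetric e -> irreflexive e -> acyclic e ->
  forall U S1 S2, min_skew_forcing_set_in e U S1 -> min_skew_forcing_set_in e U S2 ->
  connect (ZTE_adj_in e U) S1 S2.
Proof.
move=> e_sym e_irr e_acyclic U; have [n] := ubnP #|U|.
elim: n U => // n IHn U ltUn S1 S2.
have [[l [p [lU leaf_lp]]]|no_edge] := forest_leaf_or_edgeless e_sym e_irr e_acyclic U.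
  apply: (ZTE_adj_in_connected_leaf e_sym e_irr lU leaf_lp); apply: IHn.
  rewrite (cardsD1 l U) lU in ltUn.
  exact: leq_ltn_trans (subset_leq_card (subD1set _ _)) ltUn.
move=> /min_skew_forcing_set_inW /(skew_forcing_set_edgeless no_edge) ->.
by move=> /min_skew_forcing_set_inW /(skew_forcing_set_edgeless no_edge) ->.
Qed.

Theorem theorem5p26 (T : finType) (e : rel T) :
  is_tree e -> ZTE_connected e.
Proof.
case=> [[e_sym e_irr] _ e_acyclic] S1 S2.
rewrite -!min_skew_forcing_set_in_setT -(eq_connect (ZTE_adj_in_setT e)).
exact: forest_ZTE_adj_in_connected.
Qed.
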